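(* Let $\mathcal{D}=(D,<,\approx)$ with $D$ infinite, $<$ a strict total order, and $\mathcal{D}$ dense and open. Let $l,r\in\mathbb{N}$. Then for every $(l,r)$-symbolic model $\rho$, the local projection $\rho_l$ is realized by some local model; that is, there is an infinite sequence $\sigma_l$ of maps $V_{\mathrm{local}}\to D$ with $\rho(i)\cap\Omega^l=\{c\in\Omega^l:\sigma_l,i\models c\}$ for all $i\in\mathbb{N}$.
   Context: $\mathcal{D}$ is dense if for all $d<d''$ in $D$ there is $d'$ with $d<d'<d''$. It is open if every $d'\in D$ has some $d<d'<d''$ in $D$. $V=V_{\mathrm{local}}\uplus V_{\mathrm{remote}}$ is a disjoint union of finite variable sets. Constraint semantics: - $\sigma,n\models\mathbf{X}^ix\approx\mathbf{X}^jy$ iff $\sigma(n+i)(x)=\sigma(n+j)(y)$. - $\sigma,n\models\mathbf{X}^ix<\mathbf{X}^jy$ iff $\sigma(n+i)(x)<\sigma(n+j)(y)$. - $\sigma,n\models\mathbf{X}^i(x\approx\mathbf{XF}y)$ iff there is $k>n+i$ with $\sigma(n+i)(x)=\sigma(k)(y)$. $\Omega^l$ is the set of all $\mathbf{X}^ix\approx\mathbf{X}^jy$ and $\mathbf{X}^ix<\mathbf{X}^jy$ with $x,y\in V_{\mathrm{local}}$ and $i,j\in\{0,\dots,l\}$. $\Omega^r$ is the set of all $\mathbf{X}^ix\approx\mathbf{X}^jy$ and $\mathbf{X}^i(x\approx\mathbf{XF}y)$ with $x,y\in V_{\mathrm{remote}}$ and $i,j\in\{0,\dots,r\}$. An $l$-frame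 is a set $\{c\in\Omega^l:\sigma_l,0\models c\}$ for some infinite sequence $\sigma_l$ of maps $V_{\mathrm{local}}\to D$. An $r$-frame is a set $FR\subseteq\Omega^r$ satisfying the following conditions, for all remote variables and indices $\le r$. 1. $\mathbf{X}^ix\approx\mathbf{X}^ix\in FR$. 2. $\approx$-constraints in $FR$ are symmetric. 3. $\approx$-constraints in $FR$ are transitive. 4. Suppose $\mathbf{X}^ix\approx\mathbf{X}^jy\in FR$. - If $i=j$, then $\mathbf{X}^i(x\approx\mathbf{XF}z)\in FR$ iff $\mathbf{X}^j(y\approx\mathbf{XF}z)\in FR$. - If $i<j$, then $\mathbf{X}^i(x\approx\mathbf{XF}y)\in FR$. Moreover, $\mathbf{X}^i(x\approx\mathbf{XF}z)\in FR$ iff either $\mathbf{X}^j(y\approx\mathbf{XF}z)\in FR$ or $\mathbf{X}^ix\approx\mathbf{X}^{j'}z\in FR$ for some $i<j'\le j$. An $(l,r)$-frame is the union of an $l$-frame and an $r$-frame. A pair $(FR_1,FR_2)$ of $(l,r)$-frames is one-step consistent if, for all variables and all $0<i,j$ (within range): - $\mathbf{X}^ix\approx\mathbf{X}^jy\in FR_1$ iff $\mathbf{X}^{i-1}x\approx\mathbf{X}^{j-1}y\in FR_2$; - $\mathbf{X}^ix<\mathbf{X}^jy\in FR_1$ iff $\mathbf{X}^{i-1}x<\mathbf{X}^{j-1}y\in FR_2$; - $\mathbf{X}^i(x\approx\mathbf{XF}y)\in FR_1$ iff $\mathbf{X}^{i-1}(x\approx\mathbf{XF}y)\in FR_2$.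 An $(l,r)$-symbolic model is an infinite sequence of $(l,r)$-frames with each consecutive pair one-step consistent. Its local projection is $\rho_l(i)=\rho(i)\cap\Omega^l$. *)

From Stdlib Require Import List.
From mathcomp Require Import all_boot.

Set Implicit Arguments.
Unset Strict Implicit.
Unset Printing Implicit Defensive.

(** * Data domain (D, <, ≈): ≈ is interpreted as equality on D. *)
Definition strict_total_order (D : Type) (lt : D -> D -> Prop) : Prop :=
  (forall d, ~ lt d d) /\
  (forall d1 d2 d3, lt d1 d2 -> lt d2 d3 -> lt d1 d3) /\
  (forall d1 d2, lt d1 d2 \/ d1 = d2 \/ lt d2 d1).

Definition infinite_type (D : Type) : Prop :=
  forall s : list D, exists d, ~ List.In d s.

Definition dense (D : Type) (lt : D -> D -> Prop) : Prop :=
  forall d d'', lt d d'' -> exists d', lt d d' /\ lt d' d''.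

Definition open_dom (D : Type) (lt : D -> D -> Prop) : Prop :=
  forall d', exists d d'', lt d d' /\ lt d' d''.

(** * Constraints over a variable type V.
    Ceq i x j y  =  X^i x ≈ X^j y
    Clt i x j y  =  X^i x < X^j y
    Cfut i x y   =  X^i (x ≈ XF y)                                         *)
Inductive constraint (V : Type) : Type :=
| Ceq  : nat -> V -> nat -> V -> constraint V
| Clt  : nat -> V -> nat -> V -> constraint V
| Cfut : nat -> V -> V -> constraint V.

Arguments Ceq {V}. Arguments Clt {V}. Arguments Cfut {V}.

Definition cmap (V W : Type) (f : V -> W) (c : constraint V) : constraint W :=
  match c with
  | Ceq i x j y => Ceq i (f x) j (f y)
  | Clt i x j y => Clt i (f x) j (f y)
  | Cfut i x y => Cfut i (f x) (f y)
  end.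

Definition sat (D : Type) (lt : D -> D -> Prop) (V : Type)
    (sigma : nat -> V -> D) (n : nat) (c : constraint V) : Prop :=
  match c with
  | Ceq i x j y => sigma (n + i) x = sigma (n + j) y
  | Clt i x j y => lt (sigma (n + i) x) (sigma (n + j) y)
  | Cfut i x y => exists k, n + i < k /\ sigma (n + i) x = sigma k y
  end.

Section Frames.
Variables (Vl Vr : finType).
Notation V := (Vl + Vr)%type.

Definition OmegaL (l : nat) (c : constraint V) : Prop :=
  match c with
  | Ceq i (inl _) j (inl _) => i <= l /\ j <= l
  | Clt i (inl _) j (inl _) => i <= l /\ j <= l
  | _ => False
  end.

Definition OmegaR (r : nat) (c : constraint V) : Prop :=
  match c with
  | Ceq i (inr _) j (inr _) => i <= r /\ j <= r
  | Cfut i (inr _) (inr _) => i <= r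
  | _ => False
  end.

Definition is_lframe (D : Type) (lt : D -> D -> Prop) (l : nat)
    (FR : constraint V -> Prop) : Prop :=
  exists sigma_l : nat -> Vl -> D,
    forall c : constraint Vl, OmegaL l (cmap inl c) ->
      (FR (cmap inl c) <-> sat lt sigma_l 0 c).

Definition is_rframe (r : nat) (FR : constraint V -> Prop) : Prop :=
  let Req i x j y := FR (Ceq i (inr x) j (inr y)) in
  let Rf i x y := FR (Cfut i (inr x) (inr y)) in
  (forall i (x : Vr), i <= r -> Req i x i x) /\
  (forall i j (x y : Vr), Req i x j y -> Req j y i x) /\
  (forall i j k (x y z : Vr), Req i x j y -> Req j y k z -> Req i x k z) /\
  (forall i j (x y : Vr), Req i x j y ->
     (i = j -> forall z : Vr, Rf i x z <-> Rf j y z) /\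
     (i < j -> Rf i x y /\
        forall z : Vr, Rf i x z <->
          (Rf j y z \/ exists j', i < j' <= j /\ Req i x j' z))).

Definition is_lrframe (D : Type) (lt : D -> D -> Prop) (l r : nat)
    (FR : constraint V -> Prop) : Prop :=
  (forall c, FR c -> OmegaL l c \/ OmegaR r c) /\
  is_lframe lt l FR /\ is_rframe r FR.

Definition cpos (c : constraint V) : Prop :=
  match c with
  | Ceq i _ j _ | Clt i _ j _ => 0 < i /\ 0 < j
  | Cfut i _ _ => 0 < i
  end.

Definition cdec (c : constraint V) : constraint V :=
  match c with
  | Ceq i x j y => Ceq i.-1 x j.-1 y
  | Clt i x j y => Clt i.-1 x j.-1 y
  | Cfut i x y => Cfut i.-1 x y
  end.

Definition one_step_consistent (l r : nat) (FR1 FR2 : constraint V -> Prop) : Prop :=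
  forall c, (OmegaL l c \/ OmegaR r c) -> cpos c -> (FR1 c <-> FR2 (cdec c)).

Definition symbolic_model (D : Type) (lt : D -> D -> Prop) (l r : nat)
    (rho : nat -> constraint V -> Prop) : Prop :=
  (forall i, is_lrframe lt l r (rho i)) /\
  (forall i, one_step_consistent l r (rho i) (rho i.+1)).

End Frames.

From mathcomp Require Import all_boot.
From Stdlib Require Import Classical ClassicalEpsilon.
From Stdlib Require List.

Set Implicit Arguments.
Unset Strict Implicit.
Unset Printing Implicit Defensive.

(* Every l-frame is realized by a window of l+1 valuations.  If a window w
   realizes frame i and t realizes frame i+1, one-step consistency says that
   t(k) and w(k+1), k < l, satisfy the same local constraints, i.e. the map
   t(k)(x) |-> w(k+1)(x) is a finite partial isomorphism of (D,<).  As D is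
   dense without endpoints, it extends to the values of t(l), which yields a
   window realizing frame i+1 and overlapping w in all but one valuation.
   Chaining such windows and keeping their first valuations gives the local
   model. *)

Lemma InP (T : eqType) (x : T) (s : seq T) : reflect (List.In x s) (x \in s).
Proof.
elim: s => [|y s IH] /=; first by constructor.
rewrite inE; apply: (iffP orP) => [[/eqP ->|/IH]|[->|/IH]]; by [left | right].
Qed.

Section StrictTotalOrder.
Variables (D : Type) (lt : D -> D -> Prop).
Hypothesis Hord : strict_total_order lt.

Lemma lt_irrefl x : ~ lt x x.
Proof. by case: Hord. Qed.

Lemma lt_trans x y z : lt x y -> lt y z -> lt x z.
Proof. by case: Hord => _ [+ _]; apply. Qed.

Lemma lt_total x y : lt x y \/ x = y \/ lt y x.
Proof. by case: Hord => _ []. Qed.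

Lemma strict_total_order_flip : strict_total_order (fun x y => lt y x).
Proof.
split; first exact: lt_irrefl.
split=> [x y z Hyx Hzy|x y]; first exact: lt_trans Hzy Hyx.
by case: (lt_total x y) => [|[]]; auto.
Qed.

Lemma nlt_lt_trans x y z : ~ lt y x -> lt y z -> lt x z.
Proof.
move=> Nyx Hyz; case: (lt_total x y) => [Hxy|[->|Hyx]] //.
exact: lt_trans Hxy Hyz.
Qed.

Lemma lt_nlt_trans x y z : lt x y -> ~ lt z y -> lt x z.
Proof.
move=> Hxy Nzy; case: (lt_total y z) => [Hyz|[<-|Hzy]] //.
exact: lt_trans Hxy Hyz.
Qed.

Lemma exists_max (C : D -> Prop) (s : list D) :
  (exists x, List.In x s /\ C x) ->
  exists m, [/\ List.In m s, C m & forall x, List.In x s -> C x -> ~ lt m x].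
Proof.
elim: s => [|y s IH] Hex; first by case: Hex => x [].
case: (classic (exists x, List.In x s /\ C x)) => [/IH[m [Hm Cm Mm]]|Hs].
  case: (classic (C y /\ lt m y)) => [[Cy Hmy]|Hn].
    exists y; split=> [|//|x [<-|Hx] Cx]; first by left.
      exact: lt_irrefl.
    by move=> /(lt_trans Hmy); apply: Mm.
  exists m; split=> [|//|x [<-|Hx] Cx]; first by right.
    by move=> Hmx; apply: Hn.
  exact: Mm.
have Cy : C y by case: Hex => x [[<- //|Hx] Cx]; case: Hs; exists x.
exists y; split=> [|//|x [<-|Hx] Cx]; first by left.
  exact: lt_irrefl.
by case: Hs; exists x.
Qed.

Lemma comparison_iff a p b q :
  (lt a p -> lt b q) -> (a = p -> b = q) -> (lt p a -> lt q b) ->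
  [/\ lt a p <-> lt b q, a = p <-> b = q & lt p a <-> lt q b].
Proof.
move=> Hlt Heq Hgt.
have Neq : ~ (lt b q /\ b = q) /\ ~ (lt q b /\ b = q).
  by split=> -[+ Ebq]; rewrite Ebq; apply: lt_irrefl.
have Nlt : ~ (lt b q /\ lt q b) by case=> Hbq /(lt_trans Hbq); apply: lt_irrefl.
move: (lt_total a p) => Htot; split; tauto.
Qed.

Definition partial_iso (P : list (D * D)) : Prop :=
  forall a b a' b', List.In (a, b) P -> List.In (a', b') P ->
    (lt a a' <-> lt b b') /\ (a = a' <-> b = b').

Lemma partial_iso_cons P p q :
  partial_iso P ->
  (forall a b, List.In (a, b) P ->
     [/\ lt a p -> lt b q, a = p -> b = q & lt p a -> lt q b]) ->
  partial_iso ((p, q) :: P).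
Proof.
move=> HP Hpq a b a' b' [[<- <-]|Hab] [[<- <-]|Hab'].
- by split; split=> // /lt_irrefl.
- have [H1 H2 H3] := Hpq _ _ Hab'.
  have [_ E2 E3] := comparison_iff H1 H2 H3.
  by split=> //; split=> /esym/E2/esym.
- have [H1 H2 H3] := Hpq _ _ Hab.
  by have [E1 E2 _] := comparison_iff H1 H2 H3.
- exact: HP.
Qed.

End StrictTotalOrder.

Section DenseOrder.
Variables (D : Type) (lt : D -> D -> Prop).
Hypotheses (Hord : strict_total_order lt) (Hdense : dense lt) (Hopen : open_dom lt).
Variable d0 : D.

Lemma exists_separating (s : list D) (L U : D -> Prop) :
  (forall x y, L x -> U y -> lt x y) ->
  exists q, (forall x, List.In x s -> L x -> lt x q) /\
            (forall y, List.In y s -> U y -> lt q y).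
Proof.
move=> HLU.
case: (classic (exists x, List.In x s /\ L x)) => [/(exists_max Hord)[m [_ Lm Mm]]|NL];
case: (classic (exists y, List.In y s /\ U y))
  => [/(exists_max (strict_total_order_flip Hord))[M [_ UM MM]]|NU].
- have [q [Hmq HqM]] := Hdense (HLU _ _ Lm UM).
  exists q; split=> z Hz Cz.
    exact: (nlt_lt_trans Hord (Mm z Hz Cz) Hmq).
  exact: (lt_nlt_trans Hord HqM (MM z Hz Cz)).
- have [_ [q [_ Hmq]]] := Hopen m.
  exists q; split=> z Hz Cz; last by case: NU; exists z.
  exact: (nlt_lt_trans Hord (Mm z Hz Cz) Hmq).
- have [q [_ [HqM _]]] := Hopen M.
  exists q; split=> z Hz Cz; first by case: NL; exists z.
  exact: (lt_nlt_trans Hord HqM (MM z Hz Cz)).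
- by exists d0; split=> z Hz Cz; [case: NL | case: NU]; exists z.
Qed.

Lemma partial_iso_extend1 P p :
  partial_iso lt P -> exists q, partial_iso lt ((p, q) :: P).
Proof.
move=> HP.
case: (classic (exists b0, List.In (p, b0) P)) => [[b0 Hb0]|Hnew].
  exists b0; apply: partial_iso_cons => // a b Hab.
  have [Hlt Heq] := HP _ _ _ _ Hab Hb0; have [Hgt _] := HP _ _ _ _ Hb0 Hab.
  by split=> [/Hlt|/Heq|/Hgt].
have [q [Hlo Hup]] := @exists_separating (List.map snd P)
  (fun b => exists2 a, List.In (a, b) P & lt a p)
  (fun b => exists2 a, List.In (a, b) P & lt p a)
  (fun b b' '(ex_intro2 a Hab Hap) '(ex_intro2 a' Hab' Hpa') =>
     (HP _ _ _ _ Hab Hab').1.1 (lt_trans Hord Hap Hpa')).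
exists q; apply: partial_iso_cons => // a b Hab.
have Hb : List.In b (List.map snd P) := List.in_map snd _ (a, b) Hab.
split=> [Hap|Eap|Hpa].
- by apply: Hlo; last by exists a.
- by case: Hnew; exists b; rewrite -Eap.
- by apply: Hup; last by exists a.
Qed.

Lemma partial_iso_extend (ps : list D) P :
  partial_iso lt P ->
  exists P', [/\ partial_iso lt P', forall x, List.In x P -> List.In x P'
               & forall p, List.In p ps -> exists q, List.In (p, q) P'].
Proof.
elim: ps P => [|p ps IH] P HP; first by exists P; split=> // p [].
have [q /IH[P' [HP' Sub Dom]]] := partial_iso_extend1 p HP.
exists P'; split=> // [x Hx|p' [<-|]]; last exact: Dom.
  by apply: Sub; right.
by exists q; apply: Sub; left.
Qed.

End DenseOrder.

Section Windows.
Variables (D : Type) (lt : D -> D -> Prop).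
Hypotheses (Hord : strict_total_order lt) (Hdense : dense lt) (Hopen : open_dom lt).
Variable d0 : D.
Variables (Vl Vr : finType) (l r : nat).

(* Only the valuations w 0, ..., w l of a window are relevant. *)
Definition realizes (FR : constraint (Vl + Vr) -> Prop) (w : nat -> Vl -> D) :=
  forall c : constraint Vl,
    @OmegaL Vl Vr l (cmap inl c) -> (FR (cmap inl c) <-> sat lt w 0 c).

Lemma realizes_partial_iso FR P (t w : nat -> Vl -> D) :
  realizes FR t -> partial_iso lt P ->
  (forall k x, k <= l -> List.In (t k x, w k x) P) -> realizes FR w.
Proof.
move=> Ht HP Htw c Hc; rewrite (Ht c Hc).
case: c Hc => [i x j y|i x j y|//] [Hi Hj] /=; rewrite !add0n.
  exact: (HP _ _ _ _ (Htw i x Hi) (Htw j y Hj)).2.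
exact: (HP _ _ _ _ (Htw i x Hi) (Htw j y Hj)).1.
Qed.

Definition shifted_pairs (t w : nat -> Vl -> D) : list (D * D) :=
  List.flat_map (fun k => List.map (fun x => (t k x, w k.+1 x)) (enum Vl)) (iota 0 l).

Lemma In_shifted_pairs t w a b :
  List.In (a, b) (shifted_pairs t w) <->
  exists k x, [/\ k < l, a = t k x & b = w k.+1 x].
Proof.
rewrite List.in_flat_map; split.
  move=> [k [/InP Hk /List.in_map_iff[x [[<- <-] _]]]].
  by exists k, x; move: Hk; rewrite mem_iota add0n.
move=> [k [x [Hk -> ->]]]; exists k; split.
  by apply/InP; rewrite mem_iota add0n.
by apply/List.in_map_iff; exists x; split=> //; apply/InP; rewrite mem_enum.
Qed.

Lemma shifted_pairs_partial_iso FR1 FR2 t w :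
  realizes FR1 w -> realizes FR2 t -> one_step_consistent l r FR1 FR2 ->
  partial_iso lt (shifted_pairs t w).
Proof.
move=> Hw Ht Hcons a b a' b'.
move=> /In_shifted_pairs[k [x [Hk -> ->]]] /In_shifted_pairs[k' [x' [Hk' -> ->]]].
have Hidx : k <= l /\ k' <= l := conj (ltnW Hk) (ltnW Hk').
have Hidx1 : k.+1 <= l /\ k'.+1 <= l := conj Hk Hk'.
have Hpos : 0 < k.+1 /\ 0 < k'.+1 := conj (ltn0Sn k) (ltn0Sn k').
split.
  move: (Ht (Clt k x k' x') Hidx) (Hw (Clt k.+1 x k'.+1 x') Hidx1)
    (Hcons (Clt k.+1 (inl x) k'.+1 (inl x')) (or_introl Hidx1) Hpos).
  by rewrite /= !add0n; tauto.
move: (Ht (Ceq k x k' x') Hidx) (Hw (Ceq k.+1 x k'.+1 x') Hidx1)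
  (Hcons (Ceq k.+1 (inl x) k'.+1 (inl x')) (or_introl Hidx1) Hpos).
by rewrite /= !add0n; tauto.
Qed.

Lemma exists_next_window FR1 FR2 w :
  realizes FR1 w -> is_lframe lt l FR2 -> one_step_consistent l r FR1 FR2 ->
  exists w', realizes FR2 w' /\ forall k x, k < l -> w' k x = w k.+1 x.
Proof.
move=> Hw [t Ht] Hcons.
have [P [HP Sub Dom]] := partial_iso_extend Hord Hdense Hopen d0
  (List.map (t l) (enum Vl)) (shifted_pairs_partial_iso Hw Ht Hcons).
have [g Hg] : exists g : Vl -> D, forall y, List.In (t l y, g y) P.
  apply: (choice (fun y q => List.In (t l y, q) P)) => y.
  by apply/Dom/List.in_map/InP; rewrite mem_enum.
exists (fun k x => if k < l then w k.+1 x else g x); split; last first.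
  by move=> k x ->.
apply: (realizes_partial_iso Ht HP) => k x Hkl /=.
case: ifP => Hk; first by apply/Sub/In_shifted_pairs; exists k, x.
have -> : k = l by apply/eqP; rewrite eqn_leq Hkl leqNgt Hk.
exact: Hg.
Qed.

Section Chain.
Variable rho : nat -> constraint (Vl + Vr) -> Prop.
Hypothesis Hrho : symbolic_model lt l r rho.

Let inhabited_window : inhabited (nat -> Vl -> D) := inhabits (fun _ _ => d0).

Fixpoint window n : nat -> Vl -> D :=
  match n with
  | 0 => epsilon inhabited_window (realizes (rho 0))
  | n.+1 => epsilon inhabited_window (fun w =>
      realizes (rho n.+1) w /\ forall k x, k < l -> w k x = window n k.+1 x)
  end.

Lemma window_next n :
  realizes (rho n) (window n) ->
  realizes (rho n.+1) (window n.+1) /\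
  forall k x, k < l -> window n.+1 k x = window n k.+1 x.
Proof.
case: Hrho => Hframe Hcons Hw.
exact: (epsilon_spec _ _ (exists_next_window Hw (Hframe n.+1).2.1 (Hcons n))).
Qed.

Lemma window_realizes n : realizes (rho n) (window n).
Proof.
elim: n => [|n /window_next[] //].
by apply: epsilon_spec; case: Hrho => /(_ 0)[_ []].
Qed.

Lemma window_first n k x : k <= l -> window (n + k) 0 x = window n k x.
Proof.
elim: k n => [|k IH] n Hk; first by rewrite addn0.
rewrite -addSnnS IH ?(ltnW Hk) //.
by have [_ ->] := window_next (window_realizes n).
Qed.

Lemma exists_local_model :
  exists sigma_l : nat -> Vl -> D,
    forall (i : nat) (c : constraint Vl),
      @OmegaL Vl Vr l (cmap inl c) -> (rho i (cmap inl c) <-> sat lt sigma_l i c).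
Proof.
exists (fun n x => window n 0 x) => i c Hc; rewrite (window_realizes i Hc).
by case: c Hc => [a x b y|a x b y|//] [Ha Hb] /=; rewrite !add0n !window_first.
Qed.

End Chain.
End Windows.

Theorem lemma2p2p3 (D : Type) (lt : D -> D -> Prop)
  (Hinf : infinite_type D) (Hord : strict_total_order lt)
  (Hdense : dense lt) (Hopen : open_dom lt)
  (Vl Vr : finType) (l r : nat)
  (rho : nat -> constraint (Vl + Vr) -> Prop) :
  symbolic_model lt l r rho ->
  exists sigma_l : nat -> Vl -> D,
    forall (i : nat) (c : constraint Vl),
      @OmegaL Vl Vr l (cmap inl c) -> (rho i (cmap inl c) <-> sat lt sigma_l i c).
Proof.
move=> Hrho; have [d0 _] := Hinf nil.
exact: (exists_local_model Hord Hdense Hopen d0 Hrho).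
Qed.
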